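(* Every monogenic ring of prime characteristic is finitely separable: if $a$ is an element of a ring with $pa=0$ for a prime $p$, then $\mathbb{Z}\langle a\rangle$ is finitely separable.
   Context: Rings are associative and not necessarily unital. $\mathbb{Z}\langle a\rangle=\{g(a): g\in\mathbb{Z}[x],\ g(0)=0\}$ is the subring generated by $a$. A ring $R$ is finitely separable if for every $r\in R$ and every subring $A\subseteq R$ with $r\notin A$ there exist a finite ring $F$ and a homomorphism $\varphi:R\to F$ with $\varphi(r)\notin\varphi(A)$. *)

From mathcomp Require Import all_boot all_order all_algebra.
Set Implicit Arguments. Unset Strict Implicit. Unset Printing Implicit Defensive.
Import GRing.Theory.

(* Associative, not necessarily unital rings (MathComp only has unital ones). *)
Record nuRing := NuRing {
  nu_car :> Type;
  nu_zero : nu_car;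
  nu_add : nu_car -> nu_car -> nu_car;
  nu_opp : nu_car -> nu_car;
  nu_mul : nu_car -> nu_car -> nu_car;
  nu_addA : forall x y z, nu_add x (nu_add y z) = nu_add (nu_add x y) z;
  nu_addC : forall x y, nu_add x y = nu_add y x;
  nu_add0r : forall x, nu_add nu_zero x = x;
  nu_addNr : forall x, nu_add (nu_opp x) x = nu_zero;
  nu_mulA : forall x y z, nu_mul x (nu_mul y z) = nu_mul (nu_mul x y) z;
  nu_mulDl : forall x y z, nu_mul (nu_add x y) z = nu_add (nu_mul x z) (nu_mul y z);
  nu_mulDr : forall x y z, nu_mul x (nu_add y z) = nu_add (nu_mul x y) (nu_mul x z)
}.

Section NuRingDefs.
Variable R : nuRing.

Fixpoint nu_natmul (n : nat) (x : R) : R :=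
  match n with 0 => nu_zero R | n'.+1 => nu_add (nu_natmul n' x) x end.

Definition nu_intmul (z : int) (x : R) : R :=
  match z with
  | Posz n => nu_natmul n x
  | Negz n => nu_opp (nu_natmul n.+1 x)
  end.

(* nu_pow1 a n = a^(n+1) *)
Fixpoint nu_pow1 (a : R) (n : nat) : R :=
  match n with 0 => a | n'.+1 => nu_mul (nu_pow1 a n') a end.

(* g(a) = sum_{1 <= i < size g} g_i a^i  (the constant coefficient is not used;
   it is required to be 0 in Zgen below) *)
Definition nu_evalZ (g : {poly int}) (a : R) : R :=
  foldr (@nu_add R) (nu_zero R)
        [seq nu_intmul g`_i%R (nu_pow1 a i.-1) | i <- iota 1 (size g).-1].

Definition Zgen (a : R) : R -> Prop :=
  fun x => exists g : {poly int}, g.[0%R]%R = 0%R /\ x = nu_evalZ g a.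

Definition is_subring (A : R -> Prop) : Prop :=
  [/\ A (nu_zero R),
      (forall x y, A x -> A y -> A (nu_add x (nu_opp y))) &
      (forall x y, A x -> A y -> A (nu_mul x y))].

End NuRingDefs.

Definition finite_type (T : Type) : Prop :=
  exists (n : nat) (f : 'I_n -> T), forall x : T, exists i, f i = x.

Definition hom_on (R F : nuRing) (S : R -> Prop) (phi : R -> F) : Prop :=
  (forall x y, S x -> S y -> phi (nu_add x y) = nu_add (phi x) (phi y)) /\
  (forall x y, S x -> S y -> phi (nu_mul x y) = nu_mul (phi x) (phi y)).

Definition finitely_separable_sub (R : nuRing) (S : R -> Prop) : Prop :=
  forall (r : R) (A : R -> Prop),
    S r -> is_subring A -> (forall x, A x -> S x) -> ~ A r ->
    exists (F : nuRing) (phi : R -> F),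
      finite_type F /\ hom_on S phi /\ ~ (exists x, A x /\ phi x = phi r).

Definition finitely_separable (R : nuRing) : Prop :=
  finitely_separable_sub (fun _ : R => True).

From HB Require Import structures.
From mathcomp Require Import all_boot all_order all_algebra.
From mathcomp Require Import boolp classical_sets functions.
From mathcomp Require Import ring.
Set Implicit Arguments. Unset Strict Implicit. Unset Printing Implicit Defensive.
Import GRing.Theory.
Local Open Scope ring_scope.

(* Over F_p, the polynomials g with g(0) = 0 map onto Z<a> by g |-> g(a), evaluated
   in the unital extension Z x R; this is a ring map whose kernel K is an ideal of
   F_p[x], and a subring A of Z<a> pulls back to a subalgebra B of x F_p[x] missing a
   preimage r' of r. It suffices to find a monic h with K <= (h) and r' not in B + (h),
   for then Z<a> -> F_p[x]/(h) is well defined and separates r from A. If K <> 0, its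
   generator will do. Otherwise B is a module over F_p[f] for some nonconstant f (an
   element of B, or x when B = 0), F_p[x] is free of finite rank over F_p[f], and
   finitely generated modules over the PID F_p[t] are residually finite. *)

Section PolyIdeals.
Variable F : fieldType.
Implicit Types (K : {poly F} -> Prop) (g q u v w x : {poly F}).

Definition poly_ideal K :=
  [/\ K 0, forall u v, K u -> K v -> K (u - v) & forall q u, K u -> K (q * u)].

Lemma poly_ideal_principal K u : poly_ideal K -> K u -> u != 0 ->
  exists g, [/\ K g, g != 0 & forall v, K v -> g %| v].
Proof.
move=> [_ KB KM]; elim: {u}(size u) {-2}u (leqnn (size u)) => [|n IH] u su Ku u0.
  by move: u0; rewrite -size_poly_eq0 -leqn0 su.
have [[v [Kv v0 svu]]|min_u] := pselect (exists v, [/\ K v, v != 0 & (size v < size u)%N]).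
  by apply: (IH v) => //; rewrite -ltnS (leq_trans svu).
exists u; split => // v Kv; apply/modp_eq0P.
have [//|vu0] := eqVneq (v %% u) 0; case: min_u.
exists (v %% u); split => //; last by rewrite ltn_modp.
have -> : v %% u = v - v %/ u * u by rewrite {2}(divp_eq v u) addrC addKr.
by apply: KB => //; apply: KM.
Qed.

Lemma poly_ideal_sep K x : poly_ideal K -> ~ K x ->
  exists2 q, q != 0 & forall w, ~ K (x - q * w).
Proof.
move=> [K0 KB KM] nKx.
have [[c c0 Kc]|K_0] := pselect (exists2 c, c != 0 & K c).
  exists c => // w Kxw; apply: nKx.
  by have := KB _ _ Kxw (KM (- w) _ Kc); rewrite mulNr opprK mulrC subrK.
have x0 : x != 0 by apply: contra_notN nKx => /eqP ->.
exists (x * 'X) => [|w Kxw]; first by rewrite mulf_neq0 ?polyX_eq0.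
have xXw0 : x * (1 - 'X * w) = 0.
  rewrite mulrBr mulr1 mulrA; have [//|nz] := eqVneq (x - x * 'X * w) 0.
  by exfalso; apply: K_0; exists (x - x * 'X * w).
move/eqP: xXw0; rewrite mulf_eq0 (negPf x0) subr_eq0 => /eqP/(congr1 (coefp 0)).
by rewrite /= coefXM coef1 => /eqP; rewrite oner_eq0.
Qed.
End PolyIdeals.

Section PolyVectors.
Variable F : fieldType.
Local Notation vec := (nat -> {poly F}).
Implicit Types (A : vec -> Prop) (q : {poly F}) (r u v : vec).

Definition vscale q v : vec := fun i => q * v i.

Definition vec_submod A :=
  [/\ A 0, forall u v, A u -> A v -> A (u - v) & forall q u, A u -> A (vscale q u)].

Definition vanishes_from k v := forall i, (k <= i)%N -> v i = 0.

Lemma vanishes_fromS k v : vanishes_from k.+1 v -> v k = 0 -> vanishes_from k v.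
Proof. by move=> vk1 vk0 i; rewrite leq_eqVlt => /predU1P [<- //|]; apply: vk1. Qed.

(* Vectors vanishing from index k encode F[t]^k. *)
Lemma vec_submod_sep k A r : vec_submod A -> (forall u, A u -> vanishes_from k u) ->
  vanishes_from k r -> ~ A r -> exists2 q, q != 0 & forall v, ~ A (r - vscale q v).
Proof.
elim: k A r => [|k IH] A r [A0 AB AZ] A_van r_van nAr.
  by case: nAr; have -> : r = 0 by apply: funext => i; apply: r_van.
pose I t := exists2 u, A u & u k = t.
have I_ideal : poly_ideal I.
  split; first by exists 0.
    by move=> _ _ [u Au <-] [v Av <-]; exists (u - v) => //; apply: AB.
  by move=> q _ [u Au <-]; exists (vscale q u) => //; apply: AZ.
have [[u0 Au0 u0k]|nIr] := pselect (I (r k)); last first.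
  have [q q0 q_sep] := poly_ideal_sep I_ideal nIr.
  by exists q => // v Arv; apply: (q_sep (v k)); exists (r - vscale q v).
pose A' u := A u /\ u k = 0.
have A'_submod : vec_submod A'.
  split; first by split.
    by move=> u v [Au uk] [Av vk]; split; [apply: AB | rewrite !fctE uk vk subrr].
  by move=> q u [Au uk]; split; [apply: AZ | rewrite /vscale uk mulr0].
have r'_van : vanishes_from k (r - u0).
  apply: vanishes_fromS; last by rewrite !fctE u0k subrr.
  by move=> i ki; rewrite !fctE r_van ?(A_van u0) ?subrr.
have nA'r' : ~ A' (r - u0).
  move=> [Ar' _]; apply: nAr.
  by have := AB _ _ Ar' (AB _ _ A0 Au0); rewrite sub0r opprK subrK.
have A'_van u : A' u -> vanishes_from k u.
  by move=> [Au uk]; apply: vanishes_fromS => //; apply: A_van.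
have [q0 q00 q0_sep] := IH A' (r - u0) A'_submod A'_van r'_van nA'r'.
have [[c c0 [uc Auc uck]]|noI] := pselect (exists2 c, c != 0 & I c).
  exists (q0 * c) => [|v Arv]; first by rewrite mulf_neq0.
  (* Adding q0 (v k) uc kills the k-th coordinate of r - u0 - q0 c v. *)
  apply: (q0_sep (vscale c v - vscale (v k) uc)); split; last first.
    by rewrite !fctE /vscale u0k uck subrr; ring.
  have -> : r - u0 - vscale q0 (vscale c v - vscale (v k) uc) =
      r - vscale (q0 * c) v - u0 - vscale (- (q0 * v k)) uc.
    by apply: funext => i; rewrite !fctE /vscale; ring.
  by apply: (AB) (AZ _ _ Auc); apply: AB.
have Ak0 u : A u -> u k = 0.
  by move=> Au; have [//|uk0] := eqVneq (u k) 0; case: noI; exists (u k) => //; exists u.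
exists q0 => // v Arv; apply: (q0_sep v).
have Ar'v : A (r - u0 - vscale q0 v) by rewrite addrAC; apply: AB.
by split => //; apply: Ak0.
Qed.

End PolyVectors.

Section FExpansion.
Variables (F : fieldType) (f : {poly F}).
Hypothesis size_f : (1 < size f)%N.
Local Notation d := (size f).-1.
Implicit Types (q u : {poly F}) (v : nat -> {poly F}).

(* F[x] is free of rank d = deg f over F[f], with basis 1, x, ..., x^(d-1). *)
Definition fexpand v : {poly F} := \sum_(i < d) 'X^i * (v i \Po f).

Lemma fexpand_is_zmod_morphism : zmod_morphism fexpand.
Proof.
by move=> u v; rewrite /fexpand -sumrB; apply: eq_bigr => i _; rewrite !fctE comp_polyB mulrBr.
Qed.
HB.instance Definition _ := GRing.isZmodMorphism.Build (nat -> {poly F}) {poly F} fexpand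
  fexpand_is_zmod_morphism.

Lemma fexpand_vscale q v : fexpand (vscale q v) = (q \Po f) * fexpand v.
Proof. by rewrite /fexpand mulr_sumr; apply: eq_bigr => i _; rewrite comp_polyM; ring. Qed.

Lemma fexpand_surj u : exists2 v, vanishes_from d v & fexpand v = u.
Proof.
have f0 : f != 0 by rewrite -size_poly_gt0 ltnW.
elim: {u}(size u) {-2}u (leqnn (size u)) => [|n IH] u su.
  by exists 0 => //; rewrite raddf0; apply/esym/eqP; rewrite -size_poly_leq0.
have [->|u0] := eqVneq u 0; first by exists 0; rewrite ?raddf0.
have [v v_van fv] : exists2 v, vanishes_from d v & fexpand v = u %/ f.
  apply: IH; rewrite size_divp // -ltnS; apply: leq_trans su.
  by rewrite ltn_subrL size_poly_gt0 u0 -subn1 subn_gt0 size_f.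
exists (fun i => if (i < d)%N then v i * 'X + ((u %% f)`_i)%:P else 0).
  by move=> i; rewrite ltnNge => ->.
rewrite [u in RHS](divp_eq u f) -fv -[X in _ = _ + X](@take_poly_id _ d); last first.
  by rewrite -ltnS prednK ?ltn_modp // ltnW.
rewrite /take_poly poly_def /fexpand mulr_suml -big_split.
apply: eq_bigr => i _ /=; rewrite ltn_ord.
by rewrite comp_polyD comp_polyM comp_polyX comp_polyC -mul_polyC; ring.
Qed.

End FExpansion.

Section PolySubmodules.
Variable F : fieldType.
Implicit Types (A B K : {poly F} -> Prop) (f g h k q r u v w : {poly F}).

Definition poly_fmodule f A :=
  [/\ A 0, forall u v, A u -> A v -> A (u - v),
      forall c u, A u -> A (c *: u) & forall u, A u -> A (f * u)].

Lemma poly_fmodule_comp f A q u : poly_fmodule f A -> A u -> A ((q \Po f) * u).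
Proof.
move=> [A0 AB AZ Af]; have AD v w : A v -> A w -> A (v + w).
  by move=> Av Aw; have := AB _ _ Av (AB _ _ A0 Aw); rewrite sub0r opprK.
elim/poly_ind: q u => [|q c IHq] u Au; first by rewrite comp_poly0 mul0r.
rewrite comp_polyD comp_polyM comp_polyX comp_polyC mulrDl -mulrA mul_polyC.
by apply: AD; [apply: IHq; apply: Af | apply: AZ].
Qed.

Lemma poly_fmodule_sep f A r : (1 < size f)%N -> poly_fmodule f A -> ~ A r ->
  exists2 h, h != 0 & forall w, ~ A (r - h * w).
Proof.
move=> f1 Amod nAr; have [A0 AB _ _] := Amod.
pose A' (v : nat -> {poly F}) := vanishes_from (size f).-1 v /\ A (fexpand f v).
have A'_submod : vec_submod A'.
  split; first by split; rewrite ?raddf0.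
    move=> u v [u_van Au] [v_van Av]; split; last by rewrite raddfB; apply: AB.
    by move=> i di; rewrite !fctE u_van ?v_van ?subrr.
  move=> q u [u_van Au]; split; last by rewrite fexpand_vscale; apply: poly_fmodule_comp.
  by move=> i di; rewrite /vscale u_van ?mulr0.
have [r' r'_van r'E] := fexpand_surj f1 r.
have nA'r' : ~ A' r' by rewrite /A' r'E => -[].
have [q q0 q_sep] := vec_submod_sep A'_submod (fun _ => @proj1 _ _) r'_van nA'r'.
exists (q \Po f) => [|w Arw]; first by rewrite comp_poly_eq0.
have [w' w'_van w'E] := fexpand_surj f1 w.
apply: (q_sep w'); split; last by rewrite raddfB /= fexpand_vscale r'E w'E.
by move=> i di; rewrite !fctE /vscale r'_van ?w'_van ?mulr0 ?subr0.
Qed.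

Definition poly_subalg B :=
  [/\ B 0, forall u v, B u -> B v -> B (u - v),
      forall c u, B u -> B (c *: u) & forall u v, B u -> B v -> B (u * v)].

Lemma poly_subalg_sep B K r : poly_subalg B -> (forall u, B u -> u`_0 = 0) ->
    poly_ideal K -> (forall k, K k -> B k) -> ~ B r ->
  exists h, [/\ h \is monic, (1 < size h)%N, forall k, K k -> h %| k
              & forall w, ~ B (r - h * w)].
Proof.
move=> [B0 BB BZ BM] B_0 K_ideal KB nBr.
suff [h h0 [hK h_sep]] :
    exists2 h, h != 0 & (forall k, K k -> h %| k) /\ forall w, ~ B (r - h * w).
  have lc0 : (lead_coef h)^-1 != 0 by rewrite invr_eq0 lead_coef_eq0.
  exists ((lead_coef h)^-1 *: h); split.
  - by rewrite monicE lead_coefZ mulVf ?lead_coef_eq0.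
  - rewrite size_scale // ltnNge; apply/negP => /size1_polyC hE.
    apply: (h_sep ((h`_0)^-1%:P * r)).
    by rewrite mulrA {1}hE -polyCM mulfV ?polyC1 ?mul1r ?subrr // -polyC_eq0 -hE.
  - by move=> k Kk; rewrite dvdpZl ?hK.
  - by move=> w; rewrite -scalerAl scalerAr; apply: h_sep.
have [[k Kk k0]|K_0] := pselect (exists2 k, K k & k != 0).
  have [_ _ KM] := K_ideal.
  have [g [Kg g0 gK]] := poly_ideal_principal K_ideal Kk k0.
  exists g => //; split => // w Brw; apply: nBr.
  by have := BB _ _ Brw (KB _ (KM (- w) _ Kg)); rewrite mulNr opprK [w * g]mulrC subrK.
have [f f1 Bf] : exists2 f : {poly F}, (1 < size f)%N & forall u, B u -> B (f * u).
  have [[g Bg g0]|B_0'] := pselect (exists2 g, B g & g != 0).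
    exists g => [|u]; last exact: BM.
    rewrite ltnNge; apply/negP => /size1_polyC gE; move: g0.
    by rewrite gE (B_0 _ Bg) eqxx.
  exists 'X => [|u Bu]; first by rewrite size_polyX.
  have [->|u0] := eqVneq u 0; first by rewrite mulr0.
  by case: B_0'; exists u.
have [h h0 h_sep] := poly_fmodule_sep f1 (And4 B0 BB BZ Bf) nBr.
exists h => //; split => // k Kk; have [->|k0] := eqVneq k 0; first exact: dvdp0.
by case: K_0; exists k.
Qed.

End PolySubmodules.

Definition nu_zmod (R : nuRing) : Type := nu_car R.
HB.instance Definition _ (R : nuRing) := gen_eqMixin (nu_zmod R).
HB.instance Definition _ (R : nuRing) := gen_choiceMixin (nu_zmod R).
HB.instance Definition _ (R : nuRing) :=
  GRing.isZmodule.Build (nu_zmod R) (@nu_addA R) (@nu_addC R) (@nu_add0r R) (@nu_addNr R).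

Section NuMul.
Variable R : nuRing.
Implicit Types (x y z : nu_zmod R) (n : nat) (m : int).

Definition zmul x y : nu_zmod R := nu_mul x y.

Lemma zmulA : associative zmul.
Proof. by move=> x y z; apply: nu_mulA. Qed.
Lemma zmulDl x : {morph zmul^~ x : y z / y + z}.
Proof. by move=> y z; apply: nu_mulDl. Qed.
Lemma zmulDr x : {morph zmul x : y z / y + z}.
Proof. by move=> y z; apply: nu_mulDr. Qed.
Lemma zmul0r x : zmul 0 x = 0.
Proof. by apply/(@addrI _ (zmul 0 x)); rewrite -zmulDl !addr0. Qed.
Lemma zmulr0 x : zmul x 0 = 0.
Proof. by apply/(@addrI _ (zmul x 0)); rewrite -zmulDr !addr0. Qed.
Lemma zmulNr x y : zmul (- x) y = - zmul x y.
Proof. by apply/(@addrI _ (zmul x y)); rewrite -zmulDl !subrr zmul0r. Qed.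
Lemma zmulrN x y : zmul x (- y) = - zmul x y.
Proof. by apply/(@addrI _ (zmul x y)); rewrite -zmulDr !subrr zmulr0. Qed.
Lemma zmulrn x y n : zmul x (y *+ n) = zmul x y *+ n.
Proof. by elim: n => [|n IH]; rewrite ?zmulr0 // !mulrS zmulDr IH. Qed.
Lemma zmulnr x y n : zmul (x *+ n) y = zmul x y *+ n.
Proof. by elim: n => [|n IH]; rewrite ?zmul0r // !mulrS zmulDl IH. Qed.
Lemma zmulrz x y m : zmul x (y *~ m) = zmul x y *~ m.
Proof. by case: m => n; rewrite /intmul ?zmulrN zmulrn. Qed.
Lemma zmulzr x y m : zmul (x *~ m) y = zmul x y *~ m.
Proof. by case: m => n; rewrite /intmul ?zmulNr zmulnr. Qed.

Lemma nu_natmulE n (x : R) : nu_natmul n x = (x : nu_zmod R) *+ n.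
Proof. by elim: n => [|n IH] //=; rewrite IH mulrSr. Qed.
Lemma nu_intmulE m (x : R) : nu_intmul m x = (x : nu_zmod R) *~ m.
Proof. by case: m => n; rewrite /nu_intmul nu_natmulE. Qed.
Lemma nu_foldr_addE (s : seq (nu_zmod R)) : foldr (@nu_add R) (nu_zero R) s = \sum_(x <- s) x.
Proof. by elim: s => [|x s IH]; rewrite ?big_nil ?big_cons //= IH. Qed.

End NuMul.

(* The Dorroh extension Z x R with (m, x)(n, y) = (mn, nx + my + xy): a unital
   ring in which polynomials over Z can be evaluated at (0, a). *)
Section Unitization.
Variable R : nuRing.

Definition unitization : Type := (int * nu_zmod R)%type.
HB.instance Definition _ := GRing.Zmodule.on unitization.
Implicit Types u v w : unitization.

Definition unit_one : unitization := (1, 0).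
Definition unit_mul u v : unitization :=
  (u.1 * v.1, v.2 *~ u.1 + u.2 *~ v.1 + zmul u.2 v.2).

Lemma unit_mulA : associative unit_mul.
Proof.
move=> [m x] [n y] [k z]; rewrite /unit_mul /=; congr (_, _); first by rewrite mulrA.
rewrite !zmulDl !zmulDr !zmulzr !zmulrz zmulA !mulrzDl -!mulrzA (mulrC n m) (mulrC k m).
rewrite -!addrA; congr (_ + (_ + _)); rewrite addrCA; congr (_ + _).
by rewrite [RHS]addrCA; congr (_ + _); rewrite addrCA.
Qed.
Lemma unit_mul1r : left_id unit_one unit_mul.
Proof. by move=> [m x]; rewrite /unit_mul /= mul1r zmul0r mul0rz !addr0 mulr1z. Qed.
Lemma unit_mulr1 : right_id unit_one unit_mul.
Proof. by move=> [m x]; rewrite /unit_mul /= mulr1 zmulr0 mul0rz add0r mulr1z addr0. Qed.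
Lemma unit_mulDl : left_distributive unit_mul +%R.
Proof.
move=> [m x] [n y] [k z]; rewrite /unit_mul /=; congr (_, _); first by rewrite mulrDl.
by rewrite zmulDl mulrzDr mulrzDl /= (addrACA (z *~ m)) (addrACA (z *~ m + x *~ k)).
Qed.
Lemma unit_mulDr : right_distributive unit_mul +%R.
Proof.
move=> [m x] [n y] [k z]; rewrite /unit_mul /=; congr (_, _); first by rewrite mulrDr.
by rewrite zmulDr mulrzDr mulrzDl /= (addrACA (y *~ m)) (addrACA (y *~ m + x *~ n)).
Qed.
Lemma unit_one_neq0 : unit_one != 0.
Proof. by apply/eqP => -[]. Qed.

HB.instance Definition _ := GRing.Zmodule_isNzRing.Build unitization
  unit_mulA unit_mul1r unit_mulr1 unit_mulDl unit_mulDr unit_one_neq0.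

Lemma unit_mulE u v : u * v = (u.1 * v.1, v.2 *~ u.1 + u.2 *~ v.1 + zmul u.2 v.2).
Proof. by []. Qed.
Lemma unit_mulzE u m : u *~ m = (u.1 *~ m, u.2 *~ m).
Proof.
have mulnE n : u *+ n = (u.1 *+ n, u.2 *+ n) by elim: n => [|n IH] //; rewrite !mulrS IH.
by case: m => n; rewrite /intmul mulnE.
Qed.
Lemma unit_intrE m : (m%:~R : unitization) = (m, 0).
Proof. by rewrite unit_mulzE /= intz mul0rz. Qed.
Lemma unit_sum1 I (s : seq I) (P : pred I) (F : I -> unitization) :
  (\sum_(i <- s | P i) F i).1 = \sum_(i <- s | P i) (F i).1.
Proof. exact: (big_morph fst). Qed.
Lemma unit_sum2 I (s : seq I) (P : pred I) (F : I -> unitization) :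
  (\sum_(i <- s | P i) F i).2 = \sum_(i <- s | P i) (F i).2.
Proof. exact: (big_morph snd). Qed.

End Unitization.

Section IntEval.
Variables (R : nuRing) (a : R).

Definition unit_gen : unitization R := (0, a).

Lemma unit_genX i : unit_gen ^+ i.+1 = (0, nu_pow1 a i : nu_zmod R).
Proof.
elim: i => [|i IH]; first by rewrite expr1.
by rewrite exprSr IH unit_mulE /= mul0r !mulr0z !add0r.
Qed.

Lemma int_commr_gen : commr_rmorph (intr : int -> unitization R) unit_gen.
Proof. by move=> m; apply: commr_int. Qed.

Definition unit_eval (g : {poly int}) : unitization R := horner_morph int_commr_gen g.
Definition int_eval (g : {poly int}) : nu_zmod R := (unit_eval g).2.

Lemma unit_evalE g : unit_eval g = \sum_(i < size g) (g`_i)%:~R * unit_gen ^+ i.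
Proof.
rewrite /unit_eval /horner_morph (@horner_coef_wide _ (size g)) ?size_poly //.
by apply: eq_bigr => i _; rewrite coef_map.
Qed.

Lemma int_evalE g :
  int_eval g = \sum_(0 <= i < (size g).-1) (nu_pow1 a i : nu_zmod R) *~ g`_i.+1.
Proof.
rewrite /int_eval unit_evalE unit_sum2.
case: (size g) => [|n]; first by rewrite !big_ord0 big_nil.
rewrite big_ord_recl big_mkord /= !unit_intrE /= mul0rz zmul0r !addr0 add0r.
apply: eq_bigr => i _.
by rewrite /bump /= unit_genX unit_intrE /= mulr0z zmul0r !addr0.
Qed.

Lemma unit_eval1 g : (unit_eval g).1 = g`_0.
Proof.
rewrite unit_evalE unit_sum1; case E: (size g) => [|n].
  by rewrite big_ord0 nth_default ?E.
rewrite big_ord_recl big1 => [|i _]; rewrite unit_mulE unit_intrE /=.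
  by rewrite mulr1 addr0.
by rewrite unit_genX mulr0.
Qed.

Lemma nu_evalZE g : nu_evalZ g a = int_eval g.
Proof.
rewrite /nu_evalZ nu_foldr_addE int_evalE big_map.
rewrite /index_iota subn0 -[iota 1 _]/(iota (1 + 0) _) iotaDl big_map.
by apply: eq_bigr => i _; rewrite nu_intmulE.
Qed.

Lemma int_eval_is_zmod_morphism : zmod_morphism int_eval.
Proof. by move=> g h; rewrite /int_eval /unit_eval rmorphB. Qed.
HB.instance Definition _ := GRing.isZmodMorphism.Build {poly int} (nu_zmod R) int_eval
  int_eval_is_zmod_morphism.

Lemma int_evalM (g h : {poly int}) :
  g`_0 = 0 -> h`_0 = 0 -> int_eval (g * h) = zmul (int_eval g) (int_eval h).
Proof.
move=> g0 h0; rewrite /int_eval {1}/unit_eval rmorphM unit_mulE !unit_eval1 g0 h0.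
by rewrite !mulr0z !add0r.
Qed.

End IntEval.

Definition nuRing_of (Q : nzRingType) : nuRing :=
  @NuRing Q 0 +%R -%R *%R (@addrA Q) (@addrC Q) (@add0r Q) (@addNr Q)
    (@mulrA Q) (@mulrDl Q) (@mulrDr Q).

Lemma finite_type_fin (T : finType) : finite_type T.
Proof. by exists #|T|, enum_val => x; exists (enum_rank x); rewrite enum_rankK. Qed.

Lemma in_qpoly_eq (F : fieldType) (h u v : {poly F}) : h \is monic -> (1 < size h)%N ->
  (in_qpoly h u == in_qpoly h v) = (h %| u - v).
Proof.
move=> h_monic h_size; have hE : mk_monic h = h by rewrite /mk_monic h_size h_monic.
by rewrite -subr_eq0 -raddfB /= -val_eqE /= hE -Pdiv.IdomainMonic.modpE.
Qed.

Section CharP.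
Variables (R : nuRing) (a : R) (p : nat).
Hypotheses (p_pr : prime p) (pa : nu_natmul p a = nu_zero R).
Implicit Types (g k u : {poly 'F_p}) (x y : R).

Lemma nu_pow1_charp i : (nu_pow1 a i : nu_zmod R) *~ p = 0.
Proof.
rewrite -pmulrn; case: i => [|i] /=; first by rewrite -nu_natmulE pa.
by rewrite -[nu_mul _ _]/(zmul _ _) -zmulrn -nu_natmulE pa zmulr0.
Qed.

Lemma int_eval_charp (v : {poly int}) : (forall i, (p %| v`_i)%Z) -> int_eval a v = 0.
Proof.
move=> pv; rewrite int_evalE big1 // => i _.
by rewrite -(divzK (pv i.+1)) mulrC mulrzA nu_pow1_charp mul0rz.
Qed.

Lemma int_eval_eqFp (v w : {poly int}) :
  map_poly intr v = map_poly intr w :> {poly 'F_p} -> int_eval a v = int_eval a w.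
Proof.
move=> vw; apply/eqP; rewrite -subr_eq0 -raddfB; apply/eqP/int_eval_charp => i.
by rewrite (dvdz_pcharf (pchar_Fp p_pr)) -coef_map rmorphB /= vw subrr coef0.
Qed.

Definition Fp_lift g : {poly int} := map_poly (fun c : 'F_p => (c : nat)%:Z) g.

Lemma Fp_liftK g : map_poly intr (Fp_lift g) = g.
Proof. by apply/polyP => i; rewrite coef_map /= coef_map_id0 // -[RHS]natr_Zp. Qed.

Definition Fp_eval g : nu_zmod R := int_eval a (Fp_lift g).

Lemma Fp_eval_is_zmod_morphism : zmod_morphism Fp_eval.
Proof.
by move=> g k; rewrite /Fp_eval -raddfB; apply: int_eval_eqFp; rewrite !rmorphB /= !Fp_liftK.
Qed.
HB.instance Definition _ := GRing.isZmodMorphism.Build {poly 'F_p} (nu_zmod R) Fp_eval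
  Fp_eval_is_zmod_morphism.

Lemma Fp_evalM g k : g`_0 = 0 -> k`_0 = 0 -> Fp_eval (g * k) = zmul (Fp_eval g) (Fp_eval k).
Proof.
move=> g0 k0; rewrite /Fp_eval -int_evalM ?coef_map_id0 ?g0 ?k0 //.
by apply: int_eval_eqFp; rewrite rmorphM /= !Fp_liftK.
Qed.

Lemma Zgen_Fp_eval x : Zgen a x -> exists g, g`_0 = 0 /\ Fp_eval g = x.
Proof.
case=> G [G0 ->]; exists (map_poly intr G); split.
  by rewrite coef_map -horner_coef0 G0.
by rewrite nu_evalZE; apply: int_eval_eqFp; rewrite Fp_liftK.
Qed.

Lemma Fp_scaleE (c : 'F_p) u : c *: u = u *+ c.
Proof. by rewrite -scaler_nat natr_Zp. Qed.

Definition Fp_kernel g := g`_0 = 0 /\ Fp_eval g = 0.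

Lemma Fp_kernel_ideal : poly_ideal Fp_kernel.
Proof.
have K0 : Fp_kernel 0 by split; rewrite ?coef0 ?raddf0.
have KB g k : Fp_kernel g -> Fp_kernel k -> Fp_kernel (g - k).
  by move=> [g0 gK] [k0 kK]; split; rewrite ?coefB ?raddfB /= ?g0 ?k0 ?gK ?kK subrr.
split => // q g Kg; rewrite -[q]comp_polyXr; apply: poly_fmodule_comp Kg; split => //.
  by move=> c k [k0 kK]; rewrite Fp_scaleE; split; rewrite ?coefMn ?raddfMn /= ?k0 ?kK mul0rn.
by move=> k [k0 kK]; split; rewrite ?coefXM ?Fp_evalM ?coefX ?kK ?zmulr0.
Qed.

Lemma Fp_eval_comap_subalg A :
  is_subring A -> poly_subalg (fun g => g`_0 = 0 /\ A (Fp_eval g)).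
Proof.
move=> [A0 AB AM]; have AD (x y : nu_zmod R) : A x -> A y -> A (x + y).
  by move=> Ax Ay; have : A (x - (0 - y)) := AB _ _ Ax (AB _ _ A0 Ay); rewrite sub0r opprK.
split.
- by split; rewrite ?coef0 ?raddf0.
- by move=> g k [g0 Ag] [k0 Ak]; split; rewrite ?coefB ?g0 ?k0 ?subrr // raddfB; apply: AB.
- move=> c g [g0 Ag]; rewrite Fp_scaleE; split; first by rewrite coefMn g0 mul0rn.
  by rewrite raddfMn; elim: (nat_of_ord c) => [|n IH]; rewrite ?mulr0n // mulrSr; apply: AD.
- move=> g k [g0 Ag] [k0 Ak]; split; first by rewrite coef0M g0 mul0r.
  by rewrite Fp_evalM //; apply: AM.
Qed.

Definition Fp_preim x := xget 0 (fun g => g`_0 = 0 /\ Fp_eval g = x).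

Lemma Fp_preimP x : (exists g, g`_0 = 0 /\ Fp_eval g = x) ->
  (Fp_preim x)`_0 = 0 /\ Fp_eval (Fp_preim x) = x.
Proof. exact: xgetPex. Qed.

Lemma Fp_preim_kernel g x : g`_0 = 0 -> Fp_eval g = x -> Fp_kernel (Fp_preim x - g).
Proof.
move=> g0 gx; have [x0 xE] := Fp_preimP (ex_intro _ g (conj g0 gx)).
by split; rewrite ?coefB ?raddfB /= ?g0 ?x0 ?xE ?gx subrr.
Qed.

Lemma Fp_quotient_hom (h : {poly 'F_p}) :
    h \is monic -> (1 < size h)%N -> (forall k, Fp_kernel k -> h %| k) ->
  hom_on (Zgen a) (fun x => in_qpoly h (Fp_preim x) : nuRing_of {poly %/ h}).
Proof.
move=> h_monic h_size hK.
have preim_eq g x : g`_0 = 0 -> Fp_eval g = x -> in_qpoly h (Fp_preim x) = in_qpoly h g.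
  by move=> g0 gx; apply/eqP; rewrite in_qpoly_eq //; apply/hK/Fp_preim_kernel.
split => x y /Zgen_Fp_eval/Fp_preimP [x0 xE] /Zgen_Fp_eval/Fp_preimP [y0 yE].
  by rewrite /= -raddfD; apply: preim_eq; rewrite ?coefD ?x0 ?y0 ?addr0 // raddfD /= xE yE.
rewrite /= -rmorphM; apply: preim_eq; first by rewrite coef0M x0 mul0r.
by rewrite Fp_evalM // xE yE.
Qed.

End CharP.

Theorem mainTheorem15 (R : nuRing) (a : R) (p : nat) :
  prime p -> nu_natmul p a = nu_zero R ->
  finitely_separable_sub (Zgen a).
Proof.
move=> p_pr pa r A Sr A_subring A_Zgen nAr.
pose B (g : {poly 'F_p}) := g`_0 = 0 /\ A (Fp_eval a g).
have [r0 rE] := Fp_preimP (Zgen_Fp_eval p_pr pa Sr).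
have nBr : ~ B (Fp_preim a p r) by rewrite /B rE => -[].
have K_B k : Fp_kernel a k -> B k by case: A_subring => A0 _ _ [k0 kK]; rewrite /B kK.
have [h [h_monic h_size hK h_sep]] := poly_subalg_sep (Fp_eval_comap_subalg p_pr pa A_subring)
  (fun _ => @proj1 _ _) (Fp_kernel_ideal p_pr pa) K_B nBr.
exists (nuRing_of {poly %/ h}), (fun x => in_qpoly h (Fp_preim a p x)).
split; first exact: finite_type_fin.
split; first exact: Fp_quotient_hom.
move=> [x [Ax /eqP]]; rewrite in_qpoly_eq // => /dvdpP [w xrE].
have [x0 xE] := Fp_preimP (Zgen_Fp_eval p_pr pa (A_Zgen x Ax)).
apply: (h_sep (- w)); rewrite mulrN opprK mulrC -xrE addrC subrK.
by split; rewrite ?xE.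
Qed.
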